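(* Let $G$ act $(\kappa,N)$-acylindrically by isometries on a $\delta$-hyperbolic geodesic space $X$, $\kappa\ge\delta>0$. Let $\alpha\ge3\delta$. Let $U\subset G$ be a finite symmetric subset containing a loxodromic element $g$ with $\|g\|^\infty>10^3\delta$, and let $p\in X$. Put $$b_0=\frac{2}{\|g\|^\infty}\left[\Delta(g)+5L(U,p)+104\delta+\alpha\right].$$ Then for every integer $b\ge b_0$ the set $S=\{ug^bu^{-1}:u\in U(g)\}$ satisfies: $S\subset U^{b+2}$; $|S|=|U(g)|$; and $S$ is $\alpha$-reduced at $p$.
   Context: Hyperbolicity: $(x,z)_t\ge\min\{(x,y)_t,(y,z)_t\}-\delta$, $(x,y)_z=\frac12(|x-z|+|y-z|-|x-y|)$. $(\kappa,N)$-acylindrical: for all $x,y$ with $|x-y|\ge\kappa$, at most $N$ elements $u$ satisfy $|ux-x|\le100\delta$ and $|uy-y|\le100\delta$. $\|g\|=\inf_x|gx-x|$, $\|g\|^\infty=\lim_n\frac1n|g^nx-x|$. $A_g=\{x:|gx-x|\le\|g\|+8\delta\}$. $E(g)$ is the stabiliser of the two-point limit set of $\langle g\rangle$; $u\sim_g v$ iff $u^{-1}v\in E(g)$; $U(g)$ is a set of representatives of $\sim_g$-classes in $U$. $\Delta(g)=\sup\{\operatorname{diam}(uA_g^{+20\delta}\cap vA_g^{+20\delta}):u\not\sim_g v\}$. $L(U,p)=\max_{u\in U}|up-p|$. $U$ finite is $\alpha$-reduced at $p$ if $U\cap U^{-1}=\varnothing$ and for distinct $u_1,u_2\in U\sqcup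 U^{-1}$, $(u_1p,u_2p)_p<\frac12\min\{|u_1p-p|,|u_2p-p|\}-\alpha-50\delta$. *)

From HB Require Import structures.
From mathcomp Require Import all_boot all_order all_algebra.
From mathcomp Require Import all_classical all_reals.
From mathcomp Require Import ereal topology normedtype sequences.

Set Implicit Arguments.
Unset Strict Implicit.
Unset Printing Implicit Defensive.

Import Order.TTheory GRing.Theory Num.Theory numFieldNormedType.Exports.
Local Open Scope classical_set_scope.
Local Open Scope ring_scope.
Local Open Scope ereal_dual_scope. Local Close Scope ereal_dual_scope.

Section HypDefs.
Context {R : realType} {X : Type} (d : X -> X -> R).

Definition gprod (x y z : X) : R := (d x z + d y z - d x y) / 2.

Definition is_metric : Prop :=
  [/\ forall x, d x x = 0, forall x y, d x y = 0 -> x = y,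
      forall x y, d x y = d y x
    & forall x y z, d x z <= d x y + d y z].

Definition geodesic_space : Prop :=
  forall x y : X, exists gam : R -> X,
    [/\ gam 0 = x, gam (d x y) = y &
        forall s t, 0 <= s <= d x y -> 0 <= t <= d x y ->
          d (gam s) (gam t) = `|s - t|].

Definition hyperbolic (delta : R) : Prop :=
  forall x y z t : X,
    gprod x z t >= Num.min (gprod x y t) (gprod y z t) - delta.

Definition nbhd (A : set X) (r : R) : set X :=
  [set x | exists2 y, A y & d x y <= r].

(* diameter in extended reals, with the convention diam(empty) = 0 *)
Definition diam (S : set X) : \bar R :=
  ereal_sup ([set 0%E] `|` [set r | exists x y, [/\ S x, S y & r = (d x y)%:E]]).

(* two sequences converge to the same point of the Gromov boundary *)
Definition same_bdry (x y : nat -> X) : Prop :=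
  forall (o : X) (M : R), exists K : nat,
    forall n m : nat, (K <= n)%N -> (K <= m)%N -> M <= gprod (x n) (y m) o.

Context {G : groupType} (act : G -> X -> X).

Definition isometric_action : Prop :=
  [/\ forall x, act 1%g x = x,
      forall (g h : G) x, act (g * h)%g x = act g (act h x)
    & forall (g : G) x y, d (act g x) (act g y) = d x y].

Definition acylindrical (delta kappa : R) (N : nat) : Prop :=
  forall x y : X, kappa <= d x y ->
    forall s : seq G, uniq s ->
      (forall u, u \in s -> d (act u x) x <= 100 * delta /\ d (act u y) y <= 100 * delta) ->
      (size s <= N)%N.

Definition transl_len (g : G) : R := inf [set d (act g x) x | x in [set: X]].

Definition stable_len (g : G) (x : X) : R :=
  limn (fun n : nat => d (act (g ^+ n)%g x) x / n%:R).

Definition loxodromic (g : G) : Prop := forall x : X, 0 < stable_len g x.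

Definition axis (delta : R) (g : G) : set X :=
  [set x | d (act g x) x <= transl_len g + 8 * delta].

(* E(g): stabiliser of the two-point limit set {g^{+oo}, g^{-oo}} of <g>,
   boundary points being represented by the sequences g^n x and g^{-n} x *)
Definition elem_sub (g : G) : set G :=
  [set u | forall x : X,
    let pos := fun n : nat => act (g ^+ n)%g x in
    let neg := fun n : nat => act ((g^-1) ^+ n)%g x in
    (same_bdry (fun n => act u (pos n)) pos \/ same_bdry (fun n => act u (pos n)) neg) /\
    (same_bdry (fun n => act u (neg n)) pos \/ same_bdry (fun n => act u (neg n)) neg)].

Definition equiv_g (g u v : G) : Prop := elem_sub g (u^-1 * v)%g.

Definition reps_of (g : G) (U U' : set G) : Prop :=
  [/\ U' `<=` U,
      forall u, U u -> exists2 v, U' v & equiv_g g u v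
    & forall v w, U' v -> U' w -> equiv_g g v w -> v = w].

(* Delta(g) = sup { diam(u A_g^{+20d} cap v A_g^{+20d}) : u not~_g v } (sup of empty = 0) *)
Definition Delta (delta : R) (g : G) : \bar R :=
  ereal_sup ([set 0%E] `|` [set r | exists u v : G, [/\ ~ equiv_g g u v &
     r = diam (act u @` nbhd (axis delta g) (20 * delta)
               `&` act v @` nbhd (axis delta g) (20 * delta))]]).

Definition Lmax (U : set G) (p : X) : R := sup [set d (act u p) p | u in U].

Definition symmetric_set (U : set G) : Prop := forall u, U u -> U (u^-1)%g.

Fixpoint spow (U : set G) (n : nat) : set G :=
  match n with
  | 0 => [set 1%g]
  | n'.+1 => [set z | exists x y, [/\ spow U n' x, U y & z = (x * y)%g]]
  end.

Definition reduced (delta alpha : R) (p : X) (S : set G) : Prop :=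
  [/\ finite_set S,
      S `&` [set u | S (u^-1)%g] = set0
    & forall u1 u2 : G,
        (S `|` [set u | S (u^-1)%g]) u1 -> (S `|` [set u | S (u^-1)%g]) u2 -> u1 <> u2 ->
        gprod (act u1 p) (act u2 p) p <
          Num.min (d (act u1 p) p) (d (act u2 p) p) / 2 - alpha - 50 * delta].

End HypDefs.

From HB Require Import structures.
From mathcomp Require Import all_boot all_order all_algebra.
From mathcomp Require Import all_classical all_reals.
From mathcomp Require Import ereal topology normedtype sequences.
From mathcomp Require Import ring lra.
Import Order.TTheory GRing.Theory Num.Theory numFieldNormedType.Exports.
Local Open Scope classical_set_scope.
Local Open Scope ring_scope.
Set Implicit Arguments. Unset Strict Implicit.

(* Write P(w, s) for the point w g^(s b) w^-1 p, with w in U(g) and s = +1 or -1; it is at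
   distance at least b ||g||^oo from p, so it suffices to bound the Gromov products
   (P(w1, s1), P(w2, s2))_p. Near w^-1 p there is a point x1 almost minimally displaced
   by g, whose g-orbit is a quasi-geodesic (a quasi-axis), and the geodesic [p, P(w, s)]
   follows w [x1, g^(s b) x1]. For w1 = w2 the two halves of the quasi-axis diverge, so
   the product is O(L(U, p) + delta). For w1, w2 in different classes, a product larger
   than Delta(g) + 5 L(U, p) + O(delta) would make the translated quasi-axes fellow-travel
   over a length exceeding Delta(g), producing two points of
   w1 A_g^{+20 delta} cap w2 A_g^{+20 delta} further apart than Delta(g). The choice
   b >= b_0 beats both bounds; this also shows that the P(w, s) are pairwise distinct,
   which gives |S| = |U(g)| and S cap S^-1 = empty. *)

Section MetricFacts.
Context {R : realType} {X : Type} (d : X -> X -> R) (Hmet : is_metric d).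
Local Notation gp := (gprod d).

Lemma d_refl x : d x x = 0. Proof. by case: Hmet. Qed.
Lemma d_sym x y : d x y = d y x. Proof. by case: Hmet. Qed.
Lemma d_triangle x y z : d x z <= d x y + d y z. Proof. by case: Hmet. Qed.
Lemma d_ge0 x y : 0 <= d x y.
Proof. by have := d_triangle x y x; rewrite d_refl (d_sym y x); lra. Qed.

Lemma gprodC x y z : gp x y z = gp y x z.
Proof. by rewrite /gprod (d_sym x y) (addrC (d x z)). Qed.

Lemma gprodxx x z : gp x x z = d x z.
Proof. by rewrite /gprod d_refl; lra. Qed.

Lemma gprod_base x y : gp x y x = 0.
Proof. by rewrite /gprod d_refl (d_sym y x); lra. Qed.

Lemma gprod_add x y z : gp y z x + gp x z y = d x y.
Proof. by rewrite /gprod (d_sym y x) (d_sym z x) (d_sym z y); lra. Qed.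

Lemma gprod_ge0 x y z : 0 <= gp x y z.
Proof. by rewrite /gprod; have := d_triangle x z y; rewrite (d_sym z y); lra. Qed.

Lemma gprod_le_d x y z : gp x y z <= d x z.
Proof. by rewrite /gprod; have := d_triangle y x z; rewrite (d_sym y x); lra. Qed.

Lemma gprod_ge_sub x y z : d x z - d x y <= gp x y z.
Proof.
rewrite /gprod; have := d_triangle x y z; have := d_triangle y x z.
by rewrite (d_sym y x); lra.
Qed.

Lemma gprod_lipl x x' y z : gp x y z <= gp x' y z + d x x'.
Proof.
rewrite /gprod; have := d_triangle x x' z; have := d_triangle x' x y.
by rewrite (d_sym x' x); lra.
Qed.

Lemma gprod_lip_base x y z z' : gp x y z <= gp x y z' + d z z'.
Proof.
rewrite /gprod; have := d_triangle x z' z; have := d_triangle y z' z.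
by rewrite (d_sym z' z); lra.
Qed.

End MetricFacts.

Section HyperbolicFacts.
Context {R : realType} {X : Type} (d : X -> X -> R) (Hmet : is_metric d).
Variable delta : R.
Hypothesis Hhyp : hyperbolic d delta.
Hypothesis delta_ge0 : 0 <= delta.
Local Notation gp := (gprod d).

Lemma hyperbolic_ge x y z t c : c <= gp x y t -> c <= gp y z t ->
  c - delta <= gp x z t.
Proof.
move=> h1 h2; have := Hhyp x y z t.
have : c <= Num.min (gp x y t) (gp y z t) by rewrite le_min h1 h2.
lra.
Qed.

Lemma hyperbolic_ge3 x y z w t c : c <= gp x y t -> c <= gp y z t ->
  c <= gp z w t -> c - 2 * delta <= gp x w t.
Proof.
move=> h1 h2 h3; have h12 := hyperbolic_ge h1 h2.
have h3' : c - delta <= gp z w t by have := delta_ge0; lra.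
by have := hyperbolic_ge h12 h3'; lra.
Qed.

Lemma hyperbolic_small x y z t s : gp x z t <= s -> s + delta < gp x y t ->
  gp y z t <= s + delta.
Proof.
move=> h1 h2; rewrite leNgt; apply/negP => h3.
have := Hhyp x y z t.
have : s + delta < Num.min (gp x y t) (gp y z t) by rewrite lt_min h2 h3.
lra.
Qed.

Lemma hyperbolic_or x y z t s : gp x z t <= s ->
  gp x y t <= s + delta \/ gp y z t <= s + delta.
Proof.
move=> h1; case: (lerP (gp x y t) (s + delta)) => h2; first by left.
by right; apply: hyperbolic_small h1 h2.
Qed.

Lemma hyperbolic_gprod_move x x' y y' t M : M <= gp x y t ->
  M + d x x' <= d x t -> M + d y y' <= d y t -> M - 2 * delta <= gp x' y' t.
Proof.
move=> hxy hx hy.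
have hxx' : M <= gp x' x t.
  by have := gprod_lipl Hmet x x' x t; rewrite gprodxx //; lra.
have hyy' : M - delta <= gp y y' t.
  have := gprod_lipl Hmet y y' y t; rewrite gprodxx // gprodC //.
  by have := delta_ge0; lra.
by have := hyperbolic_ge (hyperbolic_ge hxx' hxy) hyy'; lra.
Qed.

End HyperbolicFacts.

Section Fekete.
Context {R : realType} (a : nat -> R).
Hypothesis a_ge0 : forall n, 0 <= a n.
Hypothesis a_subadd : forall n m, a (n + m) <= a n + a m.
Hypothesis a0 : a 0%N = 0.

Let ratios := [set a n / n%:R | n in [set n | (0 < n)%N]].

Let a_mul q n : a (q * n) <= q%:R * a n.
Proof.
elim: q => [|q IH]; first by rewrite mul0n mul0r a0.
by rewrite mulSn; have := a_subadd n (q * n); rewrite -natr1; lra.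
Qed.

Let ratios_lbound : has_lbound ratios.
Proof. by exists 0 => _ [n _ <-]; rewrite divr_ge0. Qed.

Let ratios_neq0 : ratios !=set0.
Proof. by exists (a 1%N / 1%:R); exists 1%N. Qed.

Lemma fekete_cvg : a n / n%:R @[n --> \oo] --> inf ratios.
Proof.
apply/cvgrPdist_le => e e0.
have [_ [N N0 <-] hN] : exists2 y, ratios y & y < inf ratios + e / 2.
  by apply: inf_lt; [exact: ratios_neq0 | lra].
have Nr : (0 < N%:R :> R) by rewrite ltr0n.
have a1 := a_ge0 1.
near=> n.
have n0 : (0 < n)%N by near: n; exact: nbhs_infty_ge.
have nbig : N%:R * a 1 / (e / 2) <= n%:R by near: n; exact: nbhs_infty_ger.
have nr : (0 < n%:R :> R) by rewrite ltr0n.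
have lb : inf ratios <= a n / n%:R by apply: ge_inf; [exact: ratios_lbound | exists n].
suff ub : a n / n%:R <= inf ratios + e by rewrite ler_norml; apply/andP; split; lra.
have n_eq := divn_eq n N; set q := (n %/ N)%N in n_eq; set r := (n %% N)%N in n_eq.
have rN : (r < N)%N by rewrite ltn_mod.
have qN : (q * N <= n)%N by rewrite /q leq_divM.
have h1 : a n <= q%:R * a N + r%:R * a 1.
  rewrite n_eq; have := a_subadd (q * N) r; have := a_mul q N.
  by have := a_mul r 1; rewrite muln1; lra.
have hqN : q%:R * a N <= n%:R * (a N / N%:R).
  have -> : q%:R * a N = (q * N)%:R * (a N / N%:R).
    by rewrite natrM -mulrA (mulrC N%:R) -mulrA mulVf ?mulr1 // gt_eqF.
  by apply: ler_wpM2r; [rewrite divr_ge0 | rewrite ler_nat].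
have hr : r%:R * a 1 <= N%:R * a 1 by apply: ler_wpM2r => //; rewrite ler_nat ltnW.
have h3 : N%:R * a 1 <= n%:R * (e / 2) by rewrite -ler_pdivrMr; lra.
have h4 : a n <= n%:R * (inf ratios + e) by nra.
by rewrite ler_pdivrMr //; lra.
Unshelve. all: by end_near.
Qed.

Lemma fekete n : (0 < n)%N -> limn (fun m => a m / m%:R) * n%:R <= a n.
Proof.
move=> n0; rewrite (cvg_lim _ fekete_cvg) //.
have : inf ratios <= a n / n%:R by apply: ge_inf; [exact: ratios_lbound | exists n].
by rewrite ler_pdivlMr // ltr0n.
Qed.

End Fekete.

Lemma le_of_le_add_div {R : realType} (y z c : R) :
  (forall k : nat, (0 < k)%N -> y <= z + c / k%:R) -> y <= z.
Proof.
move=> H; rewrite leNgt; apply/negP => yz.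
have c0 : 0 <= c by have := H 1%N isT; rewrite divr1; lra.
set k := (Num.truncn (c / (y - z))).+1.
have hk : c / (y - z) < k%:R := truncnS_gt _.
have k0 : (0 < k%:R :> R) by rewrite ltr0n.
have := H k isT.
have : c / k%:R < y - z by rewrite ltr_pdivrMr // mulrC -ltr_pdivrMr ?subr_gt0.
lra.
Qed.

Section IsometricAction.
Context {R : realType} {X : Type} (d : X -> X -> R) (Hmet : is_metric d).
Context {G : groupType} (act : G -> X -> X) (Hact : isometric_action d act).

Lemma act1 x : act 1%g x = x. Proof. by case: Hact. Qed.
Lemma actM g h x : act (g * h)%g x = act g (act h x). Proof. by case: Hact. Qed.
Lemma d_act g x y : d (act g x) (act g y) = d x y. Proof. by case: Hact. Qed.

Lemma actK g x : act g^-1 (act g x) = x.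
Proof. by rewrite -actM mulVg act1. Qed.
Lemma actVK g x : act g (act g^-1 x) = x.
Proof. by rewrite -actM mulgV act1. Qed.
Lemma actXK g n x : act ((g^-1) ^+ n)%g (act (g ^+ n)%g x) = x.
Proof. by rewrite expVgn actK. Qed.
Lemma actXVK g n x : act (g ^+ n)%g (act ((g^-1) ^+ n)%g x) = x.
Proof. by rewrite expVgn actVK. Qed.
Lemma actXS g n x : act (g ^+ n.+1)%g x = act g (act (g ^+ n)%g x).
Proof. by rewrite expgS actM. Qed.
Lemma actXSr g n x : act (g ^+ n.+1)%g x = act (g ^+ n)%g (act g x).
Proof. by rewrite expgSr actM. Qed.

Lemma act_commute g h x : commute g h -> act g (act h x) = act h (act g x).
Proof. by move=> c; rewrite -!actM c. Qed.

Lemma d_actVl g x y : d (act g^-1 x) y = d x (act g y).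
Proof. by rewrite -(d_act g) actVK. Qed.
Lemma d_actl g x y : d (act g x) y = d x (act g^-1 y).
Proof. by rewrite -(d_act g^-1) actK. Qed.
Lemma disp_actV g x : d (act g^-1 x) x = d (act g x) x.
Proof. by rewrite d_actVl d_sym. Qed.

Lemma gprod_act g x y z : gprod d (act g x) (act g y) (act g z) = gprod d x y z.
Proof. by rewrite /gprod !d_act. Qed.

Lemma d_orbit_succ g x n : d (act (g ^+ n)%g x) (act (g ^+ n.+1)%g x) = d (act g x) x.
Proof. by rewrite actXSr d_act d_sym. Qed.

Lemma disp_subadd g x n m :
  d (act (g ^+ (n + m))%g x) x <= d (act (g ^+ n)%g x) x + d (act (g ^+ m)%g x) x.
Proof.
rewrite expgnDr actM addrC.
by have := d_triangle Hmet (act (g ^+ n)%g (act (g ^+ m)%g x)) (act (g ^+ n)%g x) x; rewrite d_act.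
Qed.

Lemma disp_move g x y : d (act g x) x <= d (act g y) y + 2 * d x y.
Proof.
have := d_triangle Hmet (act g x) (act g y) x; have := d_triangle Hmet (act g y) y x.
by rewrite d_act (d_sym Hmet y x); lra.
Qed.

Lemma disp_mul g x k n :
  d (act (g ^+ (k * n))%g x) x <= k%:R * d (act (g ^+ n)%g x) x.
Proof.
elim: k => [|k IH]; first by rewrite mul0n mul0r expg0 act1 d_refl.
by rewrite mulSn; have := disp_subadd g x n (k * n); rewrite -natr1; lra.
Qed.

(* Fekete gives T n <= d(g^n p, p). At another point x, apply it to g^(k n):
   T k n <= d(g^(k n) x, x) + 2 d(p, x) <= k d(g^n x, x) + 2 d(p, x), and let k grow. *)
Lemma stable_len_le_disp g p x n : (0 < n)%N ->
  stable_len d act g p * n%:R <= d (act (g ^+ n)%g x) x.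
Proof.
move=> n0; set T := stable_len d act g p.
have hp m : (0 < m)%N -> T * m%:R <= d (act (g ^+ m)%g p) p.
  apply: (fekete (a := fun m => d (act (g ^+ m)%g p) p)) => [k|k l|].
  - exact: d_ge0.
  - exact: disp_subadd.
  - by rewrite expg0 act1 d_refl.
apply: (@le_of_le_add_div _ _ _ (2 * d p x)) => k k0.
have kr : (0 < k%:R :> R) by rewrite ltr0n.
have h1 : T * (k * n)%N%:R <= d (act (g ^+ (k * n))%g p) p by apply: hp; rewrite muln_gt0 k0.
have h2 := disp_move (g ^+ (k * n))%g p x.
have h3 := disp_mul g x k n.
rewrite natrM in h1.
rewrite -(ler_pM2l kr) mulrDr.
have -> : k%:R * (2 * d p x / k%:R) = 2 * d p x by field; rewrite gt_eqF.
nra.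
Qed.

End IsometricAction.

Section OrbitGeometry.
Context {R : realType} {X : Type} (d : X -> X -> R) (Hmet : is_metric d).
Context {G : groupType} (act : G -> X -> X) (Hact : isometric_action d act).
Variable delta : R.
Hypothesis Hhyp : hyperbolic d delta.
Hypothesis delta_ge0 : 0 <= delta.
Local Notation gp := (gprod d).

Lemma gprod_orbit_shift gam x n :
  gp (act (gam ^+ n)%g x) (act (gam ^+ n.+2)%g x) (act (gam ^+ n.+1)%g x)
  = gp (act gam^-1 x) (act gam x) x.
Proof.
have e1 : (gam ^+ n.+1 * gam^-1 = gam ^+ n)%g by rewrite expgSr mulgK.
have e2 : (gam ^+ n.+1 * gam = gam ^+ n.+2)%g by rewrite -expgSr.
by rewrite -[RHS](gprod_act Hact (gam ^+ n.+1)%g) -!(actM Hact) e1 e2.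
Qed.

Lemma orbit_gprod_forward gam A x :
  gp (act gam^-1 x) (act gam x) x <= A -> 2 * A + 3 * delta < d (act gam x) x ->
  forall m, gp x (act (gam ^+ m.+2)%g x) (act (gam ^+ m.+1)%g x) <= A + delta.
Proof.
move=> hA ha; have d0 := delta_ge0; have A0 : 0 <= A.
  by have := gprod_ge0 Hmet (act gam^-1 x) (act gam x) x; lra.
elim=> [|m IH].
  by have := gprod_orbit_shift gam x 0; rewrite expg0 (act1 Hact); lra.
have h1 := gprod_orbit_shift gam x m.+1; rewrite -h1 in hA.
have h2 : A + delta < gp (act (gam ^+ m.+1)%g x) x (act (gam ^+ m.+2)%g x).
  have := gprod_add Hmet (act (gam ^+ m.+1)%g x) (act (gam ^+ m.+2)%g x) x.
  by rewrite (d_orbit_succ Hmet Hact) (gprodC Hmet (act (gam ^+ m.+2)%g x)); lra.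
by have := hyperbolic_small Hhyp hA h2; lra.
Qed.

Lemma orbit_gprod gam A x i j :
  gp (act gam^-1 x) (act gam x) x <= A -> 2 * A + 3 * delta < d (act gam x) x ->
  gp (act ((gam^-1) ^+ i)%g x) (act (gam ^+ j)%g x) x <= A + 2 * delta.
Proof.
move=> hA ha; have d0 := delta_ge0; have A0 : 0 <= A.
  by have := gprod_ge0 Hmet (act gam^-1 x) (act gam x) x; lra.
have hAV : gp (act (gam^-1)^-1 x) (act gam^-1 x) x <= A by rewrite invgK gprodC.
have haV : 2 * A + 3 * delta < d (act gam^-1 x) x by rewrite (disp_actV Hmet Hact).
case: i => [|i]; first by rewrite expg0 (act1 Hact) gprod_base //; lra.
case: j => [|j]; first by rewrite expg0 (act1 Hact) gprodC // gprod_base //; lra.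
have h1 : gp (act gam x) (act ((gam^-1) ^+ i.+1)%g x) x <= A + delta.
  rewrite gprodC // -(gprod_act Hact (gam ^+ i.+1)%g) (actXVK Hact) -(actXSr Hact).
  exact: orbit_gprod_forward hA ha i.
have h2 : A + 2 * delta < gp (act gam x) (act (gam ^+ j.+1)%g x) x.
  case: j => [|j]; first by rewrite expg1 gprodxx //; lra.
  have hl : gp x (act (gam ^+ j.+2)%g x) (act gam x) <= A + delta.
    rewrite -(gprod_act Hact ((gam^-1) ^+ j.+2)%g) (actXK Hact).
    rewrite [X in gp _ _ X](actXSr Hact) (actK Hact) gprodC //.
    exact: orbit_gprod_forward hAV haV j.
  have := gprod_add Hmet x (act gam x) (act (gam ^+ j.+2)%g x).
  by rewrite (d_sym Hmet x); lra.
have h2' : A + delta + delta < gp (act gam x) (act (gam ^+ j.+1)%g x) x by lra.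
by have := hyperbolic_small Hhyp h1 h2'; rewrite gprodC //; lra.
Qed.

Lemma orbit_gprod_between gam A x j b : (j <= b)%N ->
  gp (act gam^-1 x) (act gam x) x <= A -> 2 * A + 3 * delta < d (act gam x) x ->
  gp x (act (gam ^+ b)%g x) (act (gam ^+ j)%g x) <= A + 2 * delta.
Proof.
move=> jb hA ha; rewrite -(gprod_act Hact ((gam^-1) ^+ j)%g) (actXK Hact).
rewrite -(subnKC jb) expgnDr (actM Hact) (actXK Hact).
exact: orbit_gprod hA ha.
Qed.

End OrbitGeometry.

Section GeodesicFacts.
Context {R : realType} {X : Type} (d : X -> X -> R) (Hmet : is_metric d).
Hypothesis Hgeod : geodesic_space d.
Local Notation gp := (gprod d).

Lemma geodesic_point x y t : 0 <= t <= d x y ->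
  exists z, d x z = t /\ d z y = d x y - t.
Proof.
move=> ht; have [gam [gam0 gam1 gamE]] := Hgeod x y.
have hy : 0 <= d x y <= d x y by rewrite lexx d_ge0.
exists (gam t); split.
  by rewrite -{1}gam0 gamE ?ht ?lexx ?d_ge0 // sub0r normrN ger0_norm //; case/andP: ht.
by rewrite -{1}gam1 gamE ?ht // distrC ger0_norm // subr_ge0; case/andP: ht.
Qed.

Lemma geodesic_midpoint x y : exists z, d x z <= d x y / 2 /\ d z y <= d x y / 2.
Proof.
have hxy := d_ge0 Hmet x y.
have [z [hz1 hz2]] : exists z, d x z = d x y / 2 /\ d z y = d x y - d x y / 2.
  by apply: geodesic_point; apply/andP; split; lra.
by exists z; split; lra.
Qed.

Variable delta : R.
Hypothesis Hhyp : hyperbolic d delta.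
Hypothesis delta_ge0 : 0 <= delta.

(* The point of [x, y] at distance (w, y)_x from x. *)
Lemma geodesic_near_point x y w :
  exists z, d x z + d z y = d x y /\ d w z <= gp x y w + 2 * delta.
Proof.
have ht : 0 <= gp w y x <= d x y.
  by rewrite gprod_ge0 //= gprodC // (d_sym Hmet x y) gprod_le_d.
have [z [hz1 hz2]] := geodesic_point ht.
exists z; split; first by rewrite hz1 hz2; lra.
have e1 := d_sym Hmet z x; have e2 := d_sym Hmet y x; have e3 := d_sym Hmet z y.
have e4 := d_sym Hmet w x; have e5 := d_sym Hmet y w; have e6 := d_sym Hmet z w.
have h2 : gp w y x <= gp y z x by move: hz1 hz2; rewrite /gprod; lra.
have := hyperbolic_ge Hhyp (lexx (gp w y x)) h2.
by move: hz1 hz2; rewrite /gprod; lra.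
Qed.

Lemma gprod_geodesic_between o e x x' m B :
  d o m + d m e = d o e -> d o x <= d o m -> d o m <= d o x' ->
  gp o e x <= B -> gp o e x' <= B -> gp x x' m <= 3 * B + 2 * delta.
Proof.
move=> hm hx hx' hB1 hB2.
have c1 := d_sym Hmet o e; have c2 := d_sym Hmet o x; have c3 := d_sym Hmet o x'.
have c4 := d_sym Hmet o m; have c5 := d_sym Hmet e x; have c6 := d_sym Hmet e x'.
have c7 := d_sym Hmet e m; have c8 := d_sym Hmet x x'; have c9 := d_sym Hmet x m.
have c10 := d_sym Hmet x' m.
have B0 : 0 <= B by have := gprod_ge0 Hmet o e x; lra.
have h1 : d o x - B <= gp x e o by move: hB1; rewrite /gprod; lra.
have h2 : d o x - B <= gp e m o by rewrite /gprod; lra.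
have h3 := hyperbolic_ge Hhyp h1 h2.
have h4 : d e x' - 2 * B <= gp x' o e by move: hB2; rewrite /gprod; lra.
have h5 : d e x' - 2 * B <= gp o m e by move: hB2; rewrite /gprod; lra.
have h6 := hyperbolic_ge Hhyp h4 h5.
have t1 := d_triangle Hmet o x' e; have t2 := d_triangle Hmet o x x'.
by move: h3 h6 hB1 hB2; rewrite /gprod; lra.
Qed.

Lemma geodesic_tripod o y y' w w' r :
  d o w + d w y = d o y -> d o w' + d w' y' = d o y' ->
  d o w = r -> d o w' = r -> r <= gp y y' o -> d w w' <= 4 * delta.
Proof.
move=> hw hw' dw dw' hr.
have t1 : r <= gp w y o.
  by have := d_sym Hmet w o; have := d_sym Hmet y o; rewrite /gprod; lra.
have t3 : r <= gp y' w' o.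
  have := d_sym Hmet w' o; have := d_sym Hmet y' o; have := d_sym Hmet y' w'.
  by rewrite /gprod; lra.
have := hyperbolic_ge3 Hhyp delta_ge0 t1 hr t3.
by have := d_sym Hmet w o; have := d_sym Hmet w' o; rewrite /gprod; lra.
Qed.

Lemma geodesic_move_origin o o' y m :
  d o m + d m y = d o y -> d o o' + delta < d o m ->
  exists m', d o' m' + d m' y = d o' y /\ d m m' <= 3 * delta.
Proof.
move=> hm hfar.
have s0 : gp o y m <= 0.
  by have := d_sym Hmet o m; have := d_sym Hmet y m; rewrite /gprod; lra.
have s1 : 0 + delta < gp o o' m by have := gprod_ge_sub Hmet o o' m; lra.
have s2 := hyperbolic_small Hhyp s0 s1.
have [m' [hm'1 hm'2]] := geodesic_near_point o' y m.
by exists m'; split => //; lra.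
Qed.

End GeodesicFacts.

Lemma ex_crossing {R : realType} (f : nat -> R) c N : (0 < N)%N ->
  f 0%N <= c -> c <= f N -> exists j, [/\ (j < N)%N, f j <= c & c <= f j.+1].
Proof.
elim: N => [//|N IH] _ h0 hN.
have [N0|Npos] := posnP N; first by subst N; exists 0%N; split.
have [hc|hc] := lerP c (f N); last by exists N; split => //; apply: ltW.
by have [j [jN hj1 hj2]] := IH Npos h0 hc; exists j; split => //; apply: ltnW.
Qed.

Lemma ex_argmin_nat {R : realType} (f : nat -> R) N :
  exists n, (n <= N)%N /\ forall m, (m <= N)%N -> f n <= f m.
Proof.
elim: N => [|N [n [nN hn]]].
  by exists 0%N; split => // m; rewrite leqn0 => /eqP ->.
have [h|h] := lerP (f n) (f N.+1).
  exists n; split; first by rewrite (leq_trans nN).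
  by move=> m; rewrite leq_eqVlt ltnS => /orP[/eqP->|/hn].
exists N.+1; split => // m; rewrite leq_eqVlt ltnS => /orP[/eqP->//|/hn]; lra.
Qed.

Section OrbitPoints.
Context {R : realType} {X : Type} (d : X -> X -> R) (Hmet : is_metric d).
Context {G : groupType} (act : G -> X -> X) (Hact : isometric_action d act).
Variable delta : R.
Hypothesis Hhyp : hyperbolic d delta.
Hypothesis delta_ge0 : 0 <= delta.
Local Notation gp := (gprod d).

Lemma geodesic_orbit_close gam A x b m : geodesic_space d -> (0 < b)%N ->
  gp (act gam^-1 x) (act gam x) x <= A -> 2 * A + 3 * delta < d (act gam x) x ->
  d x m + d m (act (gam ^+ b)%g x) = d x (act (gam ^+ b)%g x) ->
  exists z, d (act gam z) z <= d (act gam x) x /\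
            d m z <= 3 * (A + 2 * delta) + 4 * delta.
Proof.
move=> Hgeod b0 hA ha hm.
have hc0 : d x (act (gam ^+ 0)%g x) <= d x m.
  by rewrite expg0 (act1 Hact) d_refl // d_ge0.
have hcb : d x m <= d x (act (gam ^+ b)%g x).
  by have := d_ge0 Hmet m (act (gam ^+ b)%g x); lra.
have [j [jb hj1 hj2]] := @ex_crossing _ (fun j => d x (act (gam ^+ j)%g x)) _ _ b0 hc0 hcb.
have e1 := orbit_gprod_between Hmet Hact Hhyp delta_ge0 (ltnW jb) hA ha.
have e2 := orbit_gprod_between Hmet Hact Hhyp delta_ge0 jb hA ha.
have hs := gprod_geodesic_between Hmet Hhyp hm hj1 hj2 e1 e2.
have [z [hz1 hz2]] := geodesic_near_point Hmet Hgeod Hhyp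
  (act (gam ^+ j)%g x) (act (gam ^+ j.+1)%g x) m.
exists z; split; last by lra.
have := d_triangle Hmet (act gam z) (act gam (act (gam ^+ j)%g x)) z.
rewrite (d_act Hact) -(actXS Hact) (d_sym Hmet z (act (gam ^+ j)%g x)).
have := d_orbit_succ Hmet Hact gam x j.
by rewrite (d_sym Hmet z (act (gam ^+ j.+1)%g x)) in hz1; lra.
Qed.

Let nearest_orbit_point_one_side gam A x q :
  2 * A + 4 * delta < d (act gam x) x -> gp q (act gam x) x <= A + delta ->
  d q x <= d q (act gam^-1 x) -> 2 * d q x - 2 * A - 4 * delta <= d q (act gam q).
Proof.
move=> ha h1 h2.
have e1 : d (act gam q) x = d q (act gam^-1 x) by rewrite (d_actl Hact).
have hb : A + delta + delta < gp (act gam x) (act gam q) x.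
  by rewrite /gprod e1 (d_act Hact) (d_sym Hmet x q); lra.
rewrite gprodC // in h1.
have := hyperbolic_small Hhyp h1 hb.
by have := d_sym Hmet q x; have := d_sym Hmet (act gam q) q; rewrite /gprod; lra.
Qed.

(* x is then roughly a projection of q to the quasi-axis through x, so gam moves q
   by about 2 d(q, x). *)
Lemma nearest_orbit_point_disp gam A x q :
  gp (act gam^-1 x) (act gam x) x <= A -> 2 * A + 4 * delta < d (act gam x) x ->
  d q x <= d q (act gam x) -> d q x <= d q (act gam^-1 x) ->
  2 * d q x <= d q (act gam q) + 2 * A + 4 * delta.
Proof.
move=> hA ha h1 h2.
have [h|h] := hyperbolic_or Hhyp q hA; last first.
  by have := nearest_orbit_point_one_side ha h h2; lra.
have h' : gp q (act gam^-1 x) x <= A + delta by rewrite gprodC.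
have ha' : 2 * A + 4 * delta < d (act gam^-1 x) x by rewrite (disp_actV Hmet Hact).
have h1' : d q x <= d q (act gam^-1^-1 x) by rewrite invgK.
have := nearest_orbit_point_one_side ha' h' h1'.
rewrite (d_sym Hmet q (act gam^-1 q)) (disp_actV Hmet Hact).
by rewrite (d_sym Hmet (act gam q)); lra.
Qed.

(* Among the points gam^n x0', n in [0, 2K], where x0' = gam^-K x0, both ends are
   farther from q than the middle one x0, so one closest to q is a local minimum. *)
Lemma ex_orbit_local_min gam (T : R) x0 q : 0 < T ->
  (forall y n, (0 < n)%N -> T * n%:R <= d (act (gam ^+ n)%g y) y) ->
  exists h : G, [/\ commute gam h, d q (act h x0) <= d q (act gam (act h x0))
                  & d q (act h x0) <= d q (act gam^-1 (act h x0))].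
Proof.
move=> T0 Hst; set K := (Num.truncn (2 * d q x0 / T)).+1.
have TK : 2 * d q x0 < T * K%:R.
  by have := truncnS_gt (2 * d q x0 / T); rewrite -/K ltr_pdivrMr // => h; lra.
set x0' := act ((gam^-1) ^+ K)%g x0.
pose f n := d q (act (gam ^+ n)%g x0').
have fK : f K = d q x0 by rewrite /f /x0' (actXVK Hact).
have f0 : d q x0 < f 0%N.
  rewrite /f expg0 (act1 Hact).
  have := Hst x0' K isT; rewrite /x0' (actXVK Hact) -/x0'.
  by have := d_triangle Hmet x0 q x0'; rewrite (d_sym Hmet x0 q); lra.
have f2K : d q x0 < f (K + K)%N.
  rewrite /f expgnDr (actM Hact) /x0' (actXVK Hact).
  have := Hst x0 K isT; have := d_triangle Hmet (act (gam ^+ K)%g x0) q x0.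
  by rewrite (d_sym Hmet (act (gam ^+ K)%g x0) q); lra.
have [n [nN hn]] := ex_argmin_nat f (K + K).
have hnK := hn K (leq_addr _ _); rewrite fK in hnK.
have n0 : n != 0%N by apply/eqP => n0; subst n; lra.
have n2K : n != (K + K)%N by apply/eqP => nE; subst n; lra.
have nlt : (n < K + K)%N by rewrite ltn_neqAle n2K nN.
exists ((gam ^+ n)%g * (gam^-1 ^+ K)%g)%g; split.
- apply: commuteM; first exact/commuteX/commute_refl.
  exact/commuteX/commuteV/commute_refl.
- by rewrite (actM Hact) -/x0' -(actXS Hact); exact: hn n.+1 nlt.
case: n n0 nlt hn {hnK nN n2K} => [//|n] _ nlt hn.
rewrite (actM Hact) -/x0' [X in _ <= d q (act _ X)](actXS Hact) (actK Hact).
by apply: hn; exact: ltnW (ltnW nlt).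
Qed.

End OrbitPoints.

Section PingPong.
Context {R : realType} {X : Type} (d : X -> X -> R) (Hmet : is_metric d).
Context {G : groupType} (act : G -> X -> X) (Hact : isometric_action d act).
Variable delta : R.
Hypothesis Hhyp : hyperbolic d delta.
Hypothesis delta_gt0 : 0 < delta.
Hypothesis Hgeod : geodesic_space d.
Variables (g : G) (p : X).
Hypothesis Hg : 1000 * delta < stable_len d act g p.
Local Notation gp := (gprod d).
Local Notation T := (stable_len d act g p).
Local Notation ell := (transl_len d act g).
Local Notation Nax := (nbhd d (axis d act delta g) (20 * delta)).

Let delta_ge0 : 0 <= delta. Proof. exact: ltW. Qed.

(* eps is the slack allowed when picking an almost minimally displaced point,
   and A0 the resulting bound on its Gromov product (see ex_almost_min_point). *)
Local Notation eps := (delta / 4).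
Local Notation A0 := (eps / 2 + 2 * delta).

Lemma transl_len_le_disp x : ell <= d (act g x) x.
Proof. by apply: ge_inf; [exists 0 => _ [y _ <-]; exact: d_ge0 | exists x]. Qed.

Lemma stable_len_le_transl : T <= ell.
Proof.
apply: lb_le_inf; first by exists (d (act g p) p); exists p.
move=> _ [y _ <-].
by have := stable_len_le_disp Hmet Hact g p y (isT : (0 < 1)%N); rewrite expg1 mulr1.
Qed.

(* If the Gromov product at g x0 were larger, the midpoint m of [x0, g x0]
   would be displaced by g strictly less than ell. *)
Lemma ex_almost_min_point : exists x0,
  gp (act g^-1 x0) (act g x0) x0 <= A0 /\ d (act g x0) x0 <= ell + eps.
Proof.
have hd := delta_gt0; have e0 : 0 < eps by lra.
have [_ [x0 _ <-] hx0] : exists2 y, [set d (act g x) x | x in [set: X]] y & y < ell + eps.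
  by apply: inf_lt; [exists (d (act g p) p); exists p | lra].
exists x0; split; last by lra.
set a := d (act g x0) x0.
have a0 : 0 <= a by exact: d_ge0.
have [m [hm1 hm2]] : exists m, d x0 m = a / 2 /\ d m (act g x0) = d x0 (act g x0) - a / 2.
  by apply: geodesic_point => //; rewrite (d_sym Hmet x0) -/a; apply/andP; split; lra.
rewrite (d_sym Hmet x0) -/a in hm2.
have hmg := transl_len_le_disp m.
rewrite -(gprod_act Hact g) (actVK Hact).
set y := act g x0; set z := act g y.
have dyx : d y x0 = a by [].
have dzy : d z y = a by rewrite /z (d_act Hact).
have dgmy : d (act g m) y = d m x0 by rewrite /y (d_act Hact).
have dzgm : d z (act g m) = d y m by rewrite /z (d_act Hact).
have c1 := d_sym Hmet m y; have c2 := d_sym Hmet x0 y; have c3 := d_sym Hmet m x0.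
have c4 := d_sym Hmet z y; have c5 := d_sym Hmet (act g m) y.
have c6 := d_sym Hmet z (act g m); have c7 := d_sym Hmet m (act g m).
rewrite leNgt; apply/negP => hc.
set c := Num.min (gp x0 z y) (a / 2).
have hc1 : c <= gp m x0 y by rewrite /c ge_min; apply/orP; right; rewrite /gprod; lra.
have hc2 : c <= gp x0 z y by rewrite /c ge_min lexx.
have hc3 : c <= gp z (act g m) y by rewrite /c ge_min; apply/orP; right; rewrite /gprod; lra.
have := hyperbolic_ge3 Hhyp delta_ge0 hc1 hc2 hc3.
have hx0a := transl_len_le_disp x0; have hT := stable_len_le_transl; have hgT := Hg.
have hcb : A0 < c by rewrite /c lt_min hc /=; lra.
by rewrite /gprod; lra.
Qed.

Definition gsgn (s : bool) : G := if s then g else g^-1%g.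

Lemma gsgnN s : gsgn (~~ s) = (gsgn s)^-1%g.
Proof. by case: s; rewrite /= ?invgK. Qed.

Lemma stable_len_le_disp_gsgn s x n : (0 < n)%N ->
  T * n%:R <= d (act (gsgn s ^+ n)%g x) x.
Proof.
move=> n0; case: s; first exact: stable_len_le_disp.
by rewrite /= expVgn (disp_actV Hmet Hact); exact: stable_len_le_disp.
Qed.

Lemma disp_gsgn s x : d (act (gsgn s) x) x = d (act g x) x.
Proof. by case: s; rewrite //= (disp_actV Hmet Hact). Qed.

Lemma disp_gsgn_gt s x : 1000 * delta < d (act (gsgn s) x) x.
Proof.
have := Hg; have := transl_len_le_disp x; have := stable_len_le_transl.
by rewrite disp_gsgn; lra.
Qed.

Lemma ex_almost_min_point_gsgn s : exists x0,
  gp (act (gsgn s)^-1 x0) (act (gsgn s) x0) x0 <= A0 /\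
  d (act (gsgn s) x0) x0 <= ell + eps.
Proof.
have [x0 [h1 h2]] := ex_almost_min_point; exists x0.
case: s => /=; first by split.
by rewrite invgK gprodC // (disp_actV Hmet Hact); split.
Qed.

Definition conj_pow (b : nat) (w : G) (s : bool) : G := (w * gsgn s ^+ b * w^-1)%g.

Lemma act_conj_pow b w s x :
  act (conj_pow b w s) x = act w (act (gsgn s ^+ b)%g (act w^-1 x)).
Proof. by rewrite /conj_pow !(actM Hact). Qed.

Lemma conj_powV b w s : (conj_pow b w s)^-1%g = conj_pow b w (~~ s).
Proof. by rewrite /conj_pow gsgnN expVgn !invgM invgK mulgA. Qed.

Lemma d_conj_pow_ge b w s : (0 < b)%N -> T * b%:R <= d (act (conj_pow b w s) p) p.
Proof.
by move=> b0; rewrite act_conj_pow (d_actl Hact); exact: stable_len_le_disp_gsgn.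
Qed.

(* Every point of the orbit of an almost minimally displaced point is as good;
   take one locally closest to w^-1 p. *)
Lemma ex_good_point_near s w L : d (act w^-1 p) p <= L -> d (act g p) p <= L ->
  exists x1, [/\ gp (act (gsgn s)^-1 x1) (act (gsgn s) x1) x1 <= A0,
    d (act (gsgn s) x1) x1 <= ell + eps &
    2 * d (act w^-1 p) x1 <= 3 * L + 2 * A0 + 4 * delta].
Proof.
move=> hw hg; set gam := gsgn s; set q := act w^-1 p.
have [x0 [hA0 ha0]] := ex_almost_min_point_gsgn s.
have hd := delta_gt0; have hgT := Hg; have T0 : 0 < T by lra.
have [h [hc l1 l2]] := ex_orbit_local_min Hmet Hact x0 q T0 (stable_len_le_disp_gsgn s).
have hcV : commute gam^-1 h by apply/commute_sym/commuteV/commute_sym.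
have e1 : gp (act gam^-1 (act h x0)) (act gam (act h x0)) (act h x0)
          = gp (act gam^-1 x0) (act gam x0) x0.
  by rewrite (act_commute Hact _ hc) (act_commute Hact _ hcV) (gprod_act Hact).
have e2 : d (act gam (act h x0)) (act h x0) = d (act gam x0) x0.
  by rewrite (act_commute Hact _ hc) (d_act Hact).
exists (act h x0); split; [by rewrite e1 | by rewrite e2 |].
have hq : d q (act gam q) <= 3 * L.
  rewrite d_sym // disp_gsgn.
  have := d_triangle Hmet (act g q) (act g p) q; have := d_triangle Hmet (act g p) p q.
  by rewrite (d_act Hact) (d_sym Hmet p q); lra.
have hA : gp (act gam^-1 (act h x0)) (act gam (act h x0)) (act h x0) <= A0 by rewrite e1.
have ha : 2 * A0 + 4 * delta < d (act gam (act h x0)) (act h x0).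
  by have := disp_gsgn_gt s (act h x0); lra.
by have := nearest_orbit_point_disp Hmet Hact Hhyp hA ha l1 l2; lra.
Qed.

Lemma gprod_conj_pow_opposite s w L b : d (act w^-1 p) p <= L -> d (act g p) p <= L ->
  gp (act (conj_pow b w s) p) (act (conj_pow b w (~~ s)) p) p
    <= 3 * (3 * L + 2 * A0 + 4 * delta) / 2 + A0 + 2 * delta.
Proof.
move=> hw hg; have hd := delta_gt0.
have [x1 [hA ha hD]] := ex_good_point_near s hw hg.
have big := disp_gsgn_gt s x1.
rewrite !act_conj_pow gsgnN -[X in gp _ _ X](actVK Hact w p) (gprod_act Hact).
set gam := gsgn s in hA ha big *; set q := act w^-1 p in hD *.
have l1 := gprod_lipl Hmet (act (gam ^+ b)%g q) (act (gam ^+ b)%g x1) (act (gam^-1 ^+ b)%g q) q.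
have l2 := gprod_lipl Hmet (act (gam^-1 ^+ b)%g q) (act (gam^-1 ^+ b)%g x1) (act (gam ^+ b)%g x1) q.
have l3 := gprod_lip_base Hmet (act (gam ^+ b)%g x1) (act (gam^-1 ^+ b)%g x1) q x1.
have ha' : 2 * A0 + 3 * delta < d (act gam x1) x1 by lra.
have := orbit_gprod Hmet Hact Hhyp delta_ge0 b b hA ha'.
rewrite !(d_act Hact) in l1 l2.
rewrite (gprodC Hmet (act (gam^-1 ^+ b)%g q)) (gprodC Hmet (act (gam^-1 ^+ b)%g x1)) in l2.
by rewrite (gprodC Hmet (act (gam^-1 ^+ b)%g x1)); lra.
Qed.

Lemma translated_axis_close s w x1 b m : (0 < b)%N ->
  gp (act (gsgn s)^-1 x1) (act (gsgn s) x1) x1 <= A0 ->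
  d (act (gsgn s) x1) x1 <= ell + eps ->
  d (act w x1) m + d m (act w (act (gsgn s ^+ b)%g x1))
    = d (act w x1) (act w (act (gsgn s ^+ b)%g x1)) ->
  exists z, d (act g z) z <= ell + eps /\
            d m (act w z) <= 3 * (A0 + 2 * delta) + 4 * delta.
Proof.
move=> b0 hA ha hm.
have hm' : d x1 (act w^-1 m) + d (act w^-1 m) (act (gsgn s ^+ b)%g x1)
           = d x1 (act (gsgn s ^+ b)%g x1).
  by rewrite (d_actVl Hact) -(d_act Hact w) (actVK Hact) -(d_act Hact w x1).
have ha' : 2 * A0 + 3 * delta < d (act (gsgn s) x1) x1.
  by have := disp_gsgn_gt s x1; have := delta_gt0; lra.
have [z [hz1 hz2]] := geodesic_orbit_close Hmet Hact Hhyp delta_ge0 Hgeod b0 hA ha' hm'.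
by exists z; rewrite -(d_actVl Hact) -(disp_gsgn s); split => //; lra.
Qed.

Lemma ex_common_nbhd_point u v z1 z2 :
  d (act g z1) z1 <= ell + eps -> d (act g z2) z2 <= ell + eps ->
  d (act u z1) (act v z2) <= 40 * delta ->
  exists c, (act u @` Nax `&` act v @` Nax) c /\ d c (act u z1) <= 20 * delta.
Proof.
move=> h1 h2 h12.
have [c [hc1 hc2]] := geodesic_midpoint Hmet Hgeod (act u z1) (act v z2).
have in_nax w z : d (act g z) z <= ell + eps -> d c (act w z) <= 20 * delta ->
    (act w @` Nax) c.
  move=> hz hcz; exists (act w^-1 c); last exact: (actVK Hact).
  exists z; last by rewrite (d_actVl Hact).
  by rewrite /axis /=; apply: (le_trans hz); rewrite lerD2l; have := delta_gt0; lra.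
have hcu : d c (act u z1) <= 20 * delta by rewrite d_sym //; lra.
by exists c; split => //; split; [exact: in_nax h1 hcu | apply: in_nax h2 _; lra].
Qed.

Section DistinctCosets.
Variables (s1 s2 : bool) (u v : G) (b : nat) (L Dl : R) (x1 x2 : X).
Hypothesis b_gt0 : (0 < b)%N.
Hypothesis hgL : d (act g p) p <= L.
Hypothesis hA1 : gp (act (gsgn s1)^-1 x1) (act (gsgn s1) x1) x1 <= A0.
Hypothesis hA2 : gp (act (gsgn s2)^-1 x2) (act (gsgn s2) x2) x2 <= A0.
Hypothesis hl1 : d (act (gsgn s1) x1) x1 <= ell + eps.
Hypothesis hl2 : d (act (gsgn s2) x2) x2 <= ell + eps.
Hypothesis hD1 : 2 * d (act u^-1 p) x1 <= 3 * L + 2 * A0 + 4 * delta.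
Hypothesis hD2 : 2 * d (act v^-1 p) x2 <= 3 * L + 2 * A0 + 4 * delta.
Hypothesis Dl_ge0 : 0 <= Dl.
Hypothesis hDl : forall c1 c2, (act u @` Nax `&` act v @` Nax) c1 ->
  (act u @` Nax `&` act v @` Nax) c2 -> d c1 c2 <= Dl.
Hypothesis hbT : Dl + 5 * L + 54 * delta + (3 * L + 2 * A0 + 4 * delta) / 2 <= T * b%:R.

(* [o, y1] and [o2, y2] are the translates by u and v of quasi-axis segments of
   g^(s b); they fellow-travel the geodesics from p to the two conjugate images of p. *)
Local Notation o := (act u x1).
Local Notation y1 := (act u (act (gsgn s1 ^+ b)%g x1)).
Local Notation o2 := (act v x2).
Local Notation y2 := (act v (act (gsgn s2 ^+ b)%g x2)).
Local Notation D1 := (d (act u^-1 p) x1).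
Local Notation D2 := (d (act v^-1 p) x2).

Let T_le_L : T <= L.
Proof.
have := hgL; have := stable_len_le_disp Hmet Hact g p p (isT : (0 < 1)%N).
by rewrite expg1 mulr1; lra.
Qed.

Let D_ge0 : 0 <= D1 /\ 0 <= D2. Proof. by split; exact: d_ge0. Qed.

Lemma gprod_translated_ends_ge :
  Dl + 5 * L + 54 * delta <= gp (act (conj_pow b u s1) p) (act (conj_pow b v s2) p) p ->
  Dl + 5 * L + 52 * delta - D1 <= gp y1 y2 o.
Proof.
move=> hP; have hd := delta_gt0; have h1 := hD1; have h2 := hD2.
have e1 : d (act (conj_pow b u s1) p) y1 = D1 by rewrite act_conj_pow !(d_act Hact).
have e2 : d (act (conj_pow b v s2) p) y2 = D2 by rewrite act_conj_pow !(d_act Hact).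
have f1 := le_trans hbT (d_conj_pow_ge u s1 b_gt0).
have f2 := le_trans hbT (d_conj_pow_ge v s2 b_gt0).
have k1 : Dl + 5 * L + 54 * delta + d (act (conj_pow b u s1) p) y1
          <= d (act (conj_pow b u s1) p) p by rewrite e1; lra.
have k2 : Dl + 5 * L + 54 * delta + d (act (conj_pow b v s2) p) y2
          <= d (act (conj_pow b v s2) p) p by rewrite e2; lra.
have := hyperbolic_gprod_move Hmet Hhyp delta_ge0 hP k1 k2.
have dpo : d p o = D1 by rewrite -(d_actVl Hact).
by have := gprod_lip_base Hmet y1 y2 p o; rewrite dpo; lra.
Qed.

Lemma ex_common_nbhd_point_near w r :
  D1 + D2 + 2 * delta <= r -> r <= gp y1 y2 o ->
  d o w + d w y1 = d o y1 -> d o w = r ->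
  exists c, (act u @` Nax `&` act v @` Nax) c /\ d c w <= 37 * delta.
Proof.
move=> hr1 hr2 hw dow; have hd := delta_gt0; have [D10 D20] := D_ge0.
have hry2 : 0 <= r <= d o y2.
  have := gprod_le_d Hmet y2 y1 o; rewrite gprodC // (d_sym Hmet y2) => hle.
  by apply/andP; split; lra.
have [w' [dow' dw'y]] := geodesic_point Hmet Hgeod hry2.
have hw' : d o w' + d w' y2 = d o y2 by lra.
have dww' := geodesic_tripod Hmet Hhyp delta_ge0 hw hw' dow dow' hr2.
have doo2 : d o o2 <= D1 + D2.
  have := d_triangle Hmet o p o2.
  by rewrite (d_actl Hact u x1 p) (d_sym Hmet x1) -(d_actVl Hact v p x2).
have far : d o o2 + delta < d o w' by lra.
have [w'' [hw'' dw'w'']] := geodesic_move_origin Hmet Hgeod Hhyp hw' far.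
have [z1 [hz1 dwz1]] := translated_axis_close b_gt0 hA1 hl1 hw.
have [z2 [hz2 dwz2]] := translated_axis_close b_gt0 hA2 hl2 hw''.
have dz12 : d (act u z1) (act v z2) <= 40 * delta.
  have := d_triangle Hmet (act u z1) w (act v z2); have := d_triangle Hmet w w' (act v z2).
  have := d_triangle Hmet w' w'' (act v z2); rewrite (d_sym Hmet (act u z1) w).
  by move: dwz1 dwz2; lra.
have [c [hc dcz1]] := ex_common_nbhd_point hz1 hz2 dz12.
exists c; split => //; have := d_triangle Hmet c (act u z1) w.
by rewrite (d_sym Hmet (act u z1)); move: dwz1; lra.
Qed.

(* Otherwise two common points of u Nax and v Nax, lying near the points at distances
   D1 + D2 + 2 delta and D1 + D2 + Dl + 77 delta along [o, y1], would be more than Dl apart. *)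
Lemma gprod_conj_pow_lt_of_points :
  gp (act (conj_pow b u s1) p) (act (conj_pow b v s2) p) p < Dl + 5 * L + 54 * delta.
Proof.
rewrite ltNge; apply/negP => /gprod_translated_ends_ge hG.
have hd := delta_gt0; have hTL := T_le_L; have hgT := Hg; have [D10 D20] := D_ge0.
have h1 := hD1; have h2 := hD2; have hDl0 := Dl_ge0.
have hr2 : D1 + D2 + Dl + 77 * delta <= gp y1 y2 o by lra.
have hGy : gp y1 y2 o <= d o y1 by rewrite (d_sym Hmet o) gprod_le_d.
have i1 : 0 <= D1 + D2 + 2 * delta <= d o y1 by apply/andP; split; lra.
have i2 : 0 <= D1 + D2 + Dl + 77 * delta <= d o y1 by apply/andP; split; lra.
have [w1 [dow1 dw1y]] := geodesic_point Hmet Hgeod i1.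
have [w2 [dow2 dw2y]] := geodesic_point Hmet Hgeod i2.
have g1 : d o w1 + d w1 y1 = d o y1 by lra.
have g2 : d o w2 + d w2 y1 = d o y1 by lra.
have k1 : D1 + D2 + 2 * delta <= gp y1 y2 o by lra.
have k2 : D1 + D2 + 2 * delta <= D1 + D2 + Dl + 77 * delta by lra.
have [c1 [hc1 dc1]] := ex_common_nbhd_point_near (lexx _) k1 g1 dow1.
have [c2 [hc2 dc2]] := ex_common_nbhd_point_near k2 hr2 g2 dow2.
have := hDl hc1 hc2; have := d_triangle Hmet o w1 w2.
have := d_triangle Hmet w1 c1 w2; have := d_triangle Hmet c1 c2 w2.
by rewrite (d_sym Hmet w1 c1); lra.
Qed.

End DistinctCosets.

Lemma gprod_conj_pow_distinct s1 s2 u v L Dl b : (0 < b)%N -> 0 <= Dl ->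
  d (act u^-1 p) p <= L -> d (act v^-1 p) p <= L -> d (act g p) p <= L ->
  (forall c1 c2, (act u @` Nax `&` act v @` Nax) c1 ->
     (act u @` Nax `&` act v @` Nax) c2 -> d c1 c2 <= Dl) ->
  Dl + 5 * L + 54 * delta + (3 * L + 2 * A0 + 4 * delta) / 2 <= T * b%:R ->
  gp (act (conj_pow b u s1) p) (act (conj_pow b v s2) p) p < Dl + 5 * L + 54 * delta.
Proof.
move=> b0 Dl0 hu hv hg hDl hbT.
have [x1 [hA1 hl1 hD1]] := ex_good_point_near s1 hu hg.
have [x2 [hA2 hl2 hD2]] := ex_good_point_near s2 hv hg.
exact: gprod_conj_pow_lt_of_points b0 hg hA1 hA2 hl1 hl2 hD1 hD2 Dl0 hDl hbT.
Qed.

Section ConjugateSet.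
Variables (U Ug : set G) (alpha L Dl : R) (b : nat).
Hypothesis U_sym : symmetric_set U.
Hypothesis U_g : U g.
Hypothesis Ug_reps : reps_of d act g U Ug.
Hypothesis hLU : forall u, U u -> d (act u p) p <= L.
Hypothesis alpha_ge0 : 0 <= alpha.
Hypothesis Dl_ge0 : 0 <= Dl.
Hypothesis hDl : forall u v, ~ equiv_g d act g u v -> forall c1 c2,
  (act u @` Nax `&` act v @` Nax) c1 -> (act u @` Nax `&` act v @` Nax) c2 -> d c1 c2 <= Dl.
Hypothesis hbT : 2 * (Dl + (5 * L + 104 * delta + alpha)) <= T * b%:R.

Let b_gt0 : (0 < b)%N.
Proof.
rewrite lt0n; apply/eqP => b0; move: hbT; rewrite b0 mulr0.
have := hLU U_g; have := Dl_ge0; have := alpha_ge0; have := delta_gt0.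
by have := d_ge0 Hmet (act g p) p; lra.
Qed.

Let d_repV_le w : Ug w -> d (act w^-1 p) p <= L.
Proof. by move=> Uw; apply/hLU/U_sym; case: Ug_reps => + _ _; apply. Qed.

Lemma gprod_conj_pow_lt w1 s1 w2 s2 : Ug w1 -> Ug w2 -> (w1, s1) <> (w2, s2) ->
  gp (act (conj_pow b w1 s1) p) (act (conj_pow b w2 s2) p) p
    < Num.min (d (act (conj_pow b w1 s1) p) p) (d (act (conj_pow b w2 s2) p) p) / 2
      - alpha - 50 * delta.
Proof.
move=> U1 U2 neq.
have hd := delta_gt0; have ha := alpha_ge0; have hDl0 := Dl_ge0; have hg := hLU U_g.
have hbT' := hbT.
have L0 : 0 <= L by have := d_ge0 Hmet (act g p) p; lra.
have hmin : T * b%:R <= Num.min (d (act (conj_pow b w1 s1) p) p) (d (act (conj_pow b w2 s2) p) p).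
  by rewrite le_min !d_conj_pow_ge.
suff : gp (act (conj_pow b w1 s1) p) (act (conj_pow b w2 s2) p) p < Dl + 5 * L + 54 * delta.
  by lra.
have [e|ne] := eqVneq w1 w2.
  subst w2; have -> : s2 = ~~ s1 by clear -neq; case: s1 s2 neq => [] [].
  by have := gprod_conj_pow_opposite s1 b (d_repV_le U1) hg; lra.
have neqv : ~ equiv_g d act g w1 w2.
  by move=> eqv; apply: (negP ne); apply/eqP; case: Ug_reps => _ _; apply.
have hbT2 : Dl + 5 * L + 54 * delta + (3 * L + 2 * A0 + 4 * delta) / 2 <= T * b%:R.
  by apply: le_trans hbT'; lra.
exact: gprod_conj_pow_distinct b_gt0 hDl0 (d_repV_le U1) (d_repV_le U2) hg (hDl neqv) hbT2.
Qed.

Lemma conj_pow_neq w1 s1 w2 s2 : Ug w1 -> Ug w2 -> (w1, s1) <> (w2, s2) ->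
  conj_pow b w1 s1 <> conj_pow b w2 s2.
Proof.
move=> U1 U2 ne e; have := gprod_conj_pow_lt U1 U2 ne.
rewrite e gprodxx // minxx; have := alpha_ge0; have := delta_gt0.
by have := d_ge0 Hmet (act (conj_pow b w2 s2) p) p; lra.
Qed.

Let S := [set conj_pow b w true | w in Ug].

Let S_symE u : (S `|` [set x | S x^-1%g]) u -> exists w s, Ug w /\ u = conj_pow b w s.
Proof.
case=> [[w Uw <-]|[w Uw e]]; first by exists w, true.
by exists w, false; split => //; rewrite -(conj_powV b w true) e invgK.
Qed.

Lemma card_conj_pow_set : (S #= Ug)%card.
Proof.
apply: inj_card_eq => w1 w2 /set_mem U1 /set_mem U2 e.
apply/eqP/negPn/negP => ne; apply: conj_pow_neq U1 U2 _ e.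
by case=> e'; rewrite e' eqxx in ne.
Qed.

Lemma reduced_conj_pow_set : finite_set U -> reduced d act delta alpha p S.
Proof.
move=> U_fin; split.
- apply: finite_image; apply: sub_finite_set U_fin.
  by case: Ug_reps.
- apply/seteqP; split => // x [[w1 U1 e1] [w2 U2 e2]].
  apply: (conj_pow_neq U1 U2 (s1 := true) (s2 := false)) => //.
  by rewrite -(conj_powV b w2 true) e2 invgK.
move=> u1 u2 /S_symE[w1 [s1 [U1 ->]]] /S_symE[w2 [s2 [U2 ->]]] ne.
apply: gprod_conj_pow_lt U1 U2 _.
by case=> e1 e2; apply: ne; rewrite e1 e2.
Qed.

End ConjugateSet.

End PingPong.

Lemma spow_conj {G : groupType} (U : set G) (g u : G) b :
  symmetric_set U -> U g -> U u -> spow U b.+2 (u * g ^+ b * u^-1)%g.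
Proof.
move=> U_sym Ug Uu.
have spow_mulX n x : spow U n x -> spow U (n + b) (x * g ^+ b)%g.
  elim: b => [|k IH] hx; first by rewrite addn0 expg0 mulg1.
  by rewrite addnS; exists (x * g ^+ k)%g, g; split; [exact: IH | | rewrite expgSr mulgA].
have hu : spow U 1 u by exists 1%g, u; split => //; rewrite mul1g.
have := spow_mulX _ _ hu; rewrite add1n => hub.
by exists (u * g ^+ b)%g, u^-1%g; split => //; apply: U_sym.
Qed.

Lemma finite_has_ubound {R : realType} (E : set R) : finite_set E -> has_ubound E.
Proof.
move=> fE; exists (\big[Order.max/0]_(x <- finmap.enum_fset (fset_set E)) x) => y Ey.
have yin : y \in finmap.enum_fset (fset_set E) by have := in_fset_set fE y; rewrite mem_set.
exact: (le_bigmax_seq 0 y xpredT id yin isT).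
Qed.

Lemma Lmax_ge {R : realType} {X : Type} (d : X -> X -> R) {G : groupType}
  (act : G -> X -> X) (U : set G) p u :
  finite_set U -> U u -> d (act u p) p <= Lmax d act U p.
Proof.
move=> fU Uu; apply: sup_upper_bound; last by exists u.
split; first by exists (d (act u p) p); exists u.
exact/finite_has_ubound/finite_image.
Qed.

Lemma Delta_real_bound {R : realType} {X : Type} (d : X -> X -> R) {G : groupType}
  (act : G -> X -> X) (delta : R) (g : G) (c K b : R) : 0 < c ->
  (c%:E * (Delta d act delta g + K%:E) <= b%:E)%E ->
  let Nax := nbhd d (axis d act delta g) (20 * delta) in
  exists Dl, [/\ 0 <= Dl, c * (Dl + K) <= b &
    forall u v, ~ equiv_g d act g u v -> forall c1 c2,
      (act u @` Nax `&` act v @` Nax) c1 -> (act u @` Nax `&` act v @` Nax) c2 ->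
      d c1 c2 <= Dl].
Proof.
move=> c0 hb Nax; have D0 : (0 <= Delta d act delta g)%E by apply: ereal_sup_ubound; left.
have diam_le u v c1 c2 : ~ equiv_g d act g u v ->
    (act u @` Nax `&` act v @` Nax) c1 -> (act u @` Nax `&` act v @` Nax) c2 ->
    ((d c1 c2)%:E <= Delta d act delta g)%E.
  move=> nuv h1 h2; apply: le_trans; last by apply: ereal_sup_ubound; right; exists u, v.
  by apply: ereal_sup_ubound; right; exists c1, c2.
move: hb D0 diam_le; case: (Delta d act delta g) => [r | |] //= hb D0 diam_le.
  move: hb; rewrite -EFinD -EFinM !lee_fin => hb.
  by exists r; split => // u v nuv c1 c2 h1 h2; rewrite -lee_fin; exact: diam_le nuv h1 h2.
by move: hb; rewrite addye // mulry gtr0_sg // mul1e leye_eq.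
Qed.

Unset Implicit Arguments.

Theorem mainTheorem12 (R : realType) (X : Type) (d : X -> X -> R)
  (G : groupType) (act : G -> X -> X) (delta kappa : R) (N : nat)
  (Hmet : is_metric d) (Hgeod : geodesic_space d) (Hhyp : hyperbolic d delta)
  (Hact : isometric_action d act) (Hacyl : acylindrical d act delta kappa N)
  (Hdelta : 0 < delta) (Hkappa : delta <= kappa)
  (alpha : R) (Halpha : 3 * delta <= alpha)
  (U : set G) (HUfin : finite_set U) (HUsym : symmetric_set U)
  (g : G) (HgU : U g) (Hlox : loxodromic d act g)
  (p : X) (Hg : 1000 * delta < stable_len d act g p)
  (Ug : set G) (HUg : reps_of d act g U Ug)
  (b : nat)
  (Hb : ((2 / stable_len d act g p)%:E
          * (Delta d act delta g + (5 * Lmax d act U p + 104 * delta + alpha)%:E)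
         <= (b%:R)%:E)%E) :
  let S := [set (u * g ^+ b * u^-1)%g | u in Ug] in
  [/\ S `<=` spow U b.+2, (S #= Ug)%card & reduced d act delta alpha p S].
Proof.
move=> S; set L := Lmax d act U p.
have hLU u : U u -> d (act u p) p <= L by exact: Lmax_ge.
have alpha_ge0 : 0 <= alpha by lra.
have c_gt0 : 0 < 2 / stable_len d act g p by rewrite divr_gt0 //; lra.
have [Dl [Dl_ge0 hcb hDl]] := Delta_real_bound c_gt0 Hb.
have hbT : 2 * (Dl + (5 * L + 104 * delta + alpha)) <= stable_len d act g p * b%:R.
  by move: hcb; rewrite mulrAC ler_pdivrMr 1?mulrC //; lra.
split.
- by move=> _ [u Uu <-]; apply: spow_conj => //; case: HUg => + _ _; apply.
- exact: (card_conj_pow_set Hmet Hact Hhyp Hdelta Hgeod Hg HUsym HgU HUg hLU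
    alpha_ge0 Dl_ge0 hDl hbT).
- exact: (reduced_conj_pow_set Hmet Hact Hhyp Hdelta Hgeod Hg HUsym HgU HUg hLU
    alpha_ge0 Dl_ge0 hDl hbT HUfin).
Qed.
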